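(* Let $n,p\ge1$ be integers, let $\mathbf{A}^{p+1}_{n+1}$ be as defined in the context, and let $t_{np}(x)=(n+1).x^{\max\{n+1,p\}}$. Then: (a) for every $a\in A$, $t_{np}(a)\vee\sim t_{np}(a)=\top$ (i.e. $\mathbf{A}^{p+1}_{n+1}\models t_{np}(x)\vee\neg t_{np}(x)\approx\top$); (b) $\mathrm{Rad}(\mathbf{A}^{p+1}_{n+1})=\{a\in A: t_{np}(a)=\top\}=\{a\in A:\ (n+1).a^k=\top\text{ for every integer }k>0\}$; (c) for every integer $k>0$ and every $a\in A$, $(n+1).\big(a\vee\sim(a^p)\big)^k=\top$.
   Context: Order $\mathbb{Z}\times\mathbb{Z}$ lexicographically: $(m,r)\preccurlyeq(k,s)$ iff $m<k$, or $m=k$ and $r\le s$; addition/subtraction of pairs is componentwise, and $\min,\max$ of pairs refer to $\preccurlyeq$. For an integer $n\ge1$ let $L^\omega_{n+1}=\{(m,r)\in\mathbb{Z}^2:(0,0)\preccurlyeq(m,r)\preccurlyeq(n,0)\}$ with $x\ast y=\max\{(0,0),x+y-(n,0)\}$ and $x\to y=\min\{(n,0),(n,0)-x+y\}$. For an integer $p\ge1$ let $L_{p+1}=\{0,1,\dots,p\}$ with $\alpha\ast\beta=\max\{0,\alpha+\beta-p\}$. Define $$A=A^{p+1}_{n+1}=\{\langle(m,r),\alpha\rangle:(m,r)\in L^\omega_{n+1},\ \alpha\in\{0,p\}\}\cup\{\langle(m,r),\alpha\rangle:(0,0)\preccurlyeq(m,r)\preccurlyeq(n-1,0),\ 0<\alpha<p\}.$$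 Order: $\langle(m,r),\alpha\rangle\le\langle(k,s),\beta\rangle$ iff one of: (o1) $\alpha\neq0$, $\alpha\le\beta$ and $(m,r)\preccurlyeq(k,s)$; (o2) $\alpha=\beta=0$ and $(k,s)\preccurlyeq(m,r)$; (o3) $\alpha=0$, $\beta\ne0$ and $(n-1,0)\preccurlyeq(m+k,r+s)$. $\wedge,\vee$ denote meet and join for $\le$. Put $\bot=\langle(n,0),0\rangle$, $\top=\langle(n,0),p\rangle$. For $a=\langle(m,r),\alpha\rangle$, $b=\langle(k,s),\beta\rangle\in A$ define $a\odot b$ by: (P1) if $\alpha,\beta\ge1$ and $\alpha+\beta>p$: $a\odot b=\langle(m,r)\ast(k,s),\alpha+\beta-p\rangle$; (P2) if $\alpha,\beta\ge1$ and $\alpha+\beta\le p$: $a\odot b=\langle\min\{(n,0),(2n-(m+k+1),-(r+s))\},0\rangle$; (P3) if $\alpha\ge1$, $\beta=0$: $a\odot b=\langle(m,r)\to(k,s),0\rangle$, and if $\alpha=0$, $\beta\ge1$: $a\odot b=\langle(k,s)\to(m,r),0\rangle$; (P4) if $\alpha=\beta=0$: $a\odot b=\langle\min\{(n,0),(m+k+1,r+s)\},0\rangle$. Define $\sim\langle(m,r),\alpha\rangle=\langle(m,r),p-\alpha\rangle$ if $\alpha\in\{0,p\}$, and $\sim\langle(m,r),\alpha\rangle=\langle(n-1-m,-r),p-\alpha\rangle$ if $0<\alpha<p$. Define $a\Rightarrow b=\sim(a\odot\sim b)$ (so $\sim a=a\Rightarrow\bot$, interpreting $\neg x=x\to\bot$).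 The algebra $\mathbf{A}^{p+1}_{n+1}$ is $\langle A;\odot,\Rightarrow,\wedge,\vee,\bot,\top\rangle$. Terms: $a^0=\top$, $a^{k+1}=a\odot a^k$; $a\oplus b=\sim(\sim a\odot\sim b)$; $0.a=\bot$, $(k+1).a=a\oplus k.a$. $\mathrm{Rad}$ is the intersection of all maximal proper implicative filters, where an implicative filter is a subset containing $\top$, closed under $\odot$ and upward closed. *)

From Stdlib Require Import ZArith Lia ClassicalEpsilon Bool.
Local Open Scope bool_scope.
Open Scope Z_scope.

(* An element <(m,r),alpha> is represented by the record (el m r alpha). *)
Record elt := el { em : Z; er : Z; eal : Z }.

Definition elt_inhabited : inhabited elt := inhabits (el 0 0 0).

Definition lexle (m r k s : Z) : Prop := m < k \/ (m = k /\ r <= s).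
Definition lexleb (m r k s : Z) : bool := (m <? k) || ((m =? k) && (r <=? s)).
Definition pmin (x y : Z * Z) : Z * Z :=
  if lexleb (fst x) (snd x) (fst y) (snd y) then x else y.
Definition pmax (x y : Z * Z) : Z * Z :=
  if lexleb (fst x) (snd x) (fst y) (snd y) then y else x.

Section Alg.
Variables n p : nat.
Let N := Z.of_nat n.
Let P := Z.of_nat p.

Definition star (x y : Z * Z) : Z * Z :=
  pmax (0, 0) (fst x + fst y - N, snd x + snd y).
Definition arrow (x y : Z * Z) : Z * Z :=
  pmin (N, 0) (N - fst x + fst y, - snd x + snd y).

Definition inA (a : elt) : Prop :=
  (lexle 0 0 (em a) (er a) /\ lexle (em a) (er a) N 0 /\ (eal a = 0 \/ eal a = P))
  \/ (lexle 0 0 (em a) (er a) /\ lexle (em a) (er a) (N - 1) 0 /\ 0 < eal a < P).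

Definition le (a b : elt) : Prop :=
  (eal a <> 0 /\ eal a <= eal b /\ lexle (em a) (er a) (em b) (er b))
  \/ (eal a = 0 /\ eal b = 0 /\ lexle (em b) (er b) (em a) (er a))
  \/ (eal a = 0 /\ eal b <> 0 /\ lexle (N - 1) 0 (em a + em b) (er a + er b)).

Definition bot : elt := el N 0 0.
Definition top : elt := el N 0 P.

Definition odot (a b : elt) : elt :=
  let m := em a in let r := er a in let al := eal a in
  let k := em b in let s := er b in let be := eal b in
  if (1 <=? al) && (1 <=? be) then
    if P <? al + be then
      let x := star (m, r) (k, s) in el (fst x) (snd x) (al + be - P)
    else
      let x := pmin (N, 0) (2 * N - (m + k + 1), - (r + s)) in el (fst x) (snd x) 0
  else if (1 <=? al) && (be =? 0) then
    let x := arrow (m, r) (k, s) in el (fst x) (snd x) 0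
  else if (al =? 0) && (1 <=? be) then
    let x := arrow (k, s) (m, r) in el (fst x) (snd x) 0
  else
    let x := pmin (N, 0) (m + k + 1, r + s) in el (fst x) (snd x) 0.

Definition neg (a : elt) : elt :=
  let m := em a in let r := er a in let al := eal a in
  if (al =? 0) || (al =? P) then el m r (P - al) else el (N - 1 - m) (- r) (P - al).

Definition imp (a b : elt) : elt := neg (odot a (neg b)).

Definition is_lub (a b c : elt) : Prop :=
  inA c /\ le a c /\ le b c /\ forall u, inA u -> le a u -> le b u -> le c u.
Definition is_glb (a b c : elt) : Prop :=
  inA c /\ le c a /\ le c b /\ forall u, inA u -> le u a -> le u b -> le u c.
Definition join (a b : elt) : elt := epsilon elt_inhabited (is_lub a b).
Definition meet (a b : elt) : elt := epsilon elt_inhabited (is_glb a b).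

Fixpoint pow (a : elt) (k : nat) : elt :=
  match k with O => top | S k' => odot a (pow a k') end.
Definition oplus (a b : elt) : elt := neg (odot (neg a) (neg b)).
Fixpoint times (k : nat) (a : elt) : elt :=
  match k with O => bot | S k' => oplus a (times k' a) end.

Definition tnp (a : elt) : elt := times (S n) (pow a (Nat.max (S n) p)).

Definition impl_filter (F : elt -> Prop) : Prop :=
  (forall a, F a -> inA a) /\ F top /\
  (forall a b, F a -> F b -> F (odot a b)) /\
  (forall a b, F a -> inA b -> le a b -> F b).
Definition proper_filter (F : elt -> Prop) : Prop :=
  impl_filter F /\ exists a, inA a /\ ~ F a.
Definition maximal_filter (F : elt -> Prop) : Prop :=
  proper_filter F /\
  forall G, proper_filter G -> (forall a, F a -> G a) -> forall a, G a -> F a.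
Definition Rad (a : elt) : Prop :=
  inA a /\ forall F, maximal_filter F -> F a.

End Alg.

From Stdlib Require Import ZArith Lia Bool ClassicalEpsilon.
Open Scope Z_scope.

(* The elements with last component [alpha = p] form an implicative filter [M]
   on which [x |-> (n+1).x] is constantly [top].  Every element outside [M] is
   nilpotent: its [max(n+1,p)]-th power is [bot], because each further factor
   lowers [alpha] by at least one until it reaches 0, after which the pair
   component climbs by at least one towards [(n,0)].  Hence [t_np] maps [M] to
   [top] and everything else to [bot], every proper filter lies inside [M], and
   [M] is the unique maximal filter, i.e. the radical.  For (c), either [a] or
   [~(a^p)] lies in [M], and [M] is upward closed. *)

Ltac bool_to_Z := repeat match goal with
 | H : (_ && _)%bool = true |- _ => apply andb_true_iff in H; destruct H
 | H : (_ || _)%bool = false |- _ => apply orb_false_iff in H; destruct H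
 | H : (_ && _)%bool = false |- _ => apply andb_false_iff in H; destruct H
 | H : (_ || _)%bool = true |- _ => apply orb_true_iff in H; destruct H
 | H : (_ <? _) = true |- _ => apply Z.ltb_lt in H
 | H : (_ <? _) = false |- _ => apply Z.ltb_ge in H
 | H : (_ <=? _) = true |- _ => apply Z.leb_le in H
 | H : (_ <=? _) = false |- _ => apply Z.leb_gt in H
 | H : (_ =? _) = true |- _ => apply Z.eqb_eq in H
 | H : (_ =? _) = false |- _ => apply Z.eqb_neq in H
 end.

Ltac destruct_ifs := cbn [fst snd em er eal] in *;
  repeat (match goal with
   | |- context [if ?b then _ else _] => destruct b eqn:?
   | H : context [if ?b then _ else _] |- _ => destruct b eqn:?
   end; bool_to_Z);
  cbn [fst snd em er eal] in *.

Ltac unfold_ops :=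
  unfold odot, star, arrow, pmin, pmax, lexleb, neg, inA, le, lexle, top, bot in *.

Ltac elt_lia := unfold_ops; destruct_ifs; lia.

Section Algebra.

Variables n p : nat.
Hypothesis hn : (1 <= n)%nat.
Hypothesis hp : (1 <= p)%nat.

Definition inM (e : elt) : Prop := inA n p e /\ eal e = Z.of_nat p.

Lemma inM_dec a : inA n p a -> {inM a} + {~ inM a}.
Proof.
  intros Ha; destruct (Z.eq_dec (eal a) (Z.of_nat p)) as [E|E];
    [left; split | right; intros [_ E']]; auto.
Qed.

Lemma inA_top : inA n p (top n p).
Proof. elt_lia. Qed.

Lemma inA_bot : inA n p (bot n).
Proof. elt_lia. Qed.

Lemma bot_neq_top : bot n <> top n p.
Proof. intros E; injection E; lia. Qed.

Lemma neg_eal_p e : eal e = Z.of_nat p -> neg n p e = el (em e) (er e) 0.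
Proof.
  destruct e as [m r al]; cbn; intros ->; unfold neg; cbn.
  rewrite Z.eqb_refl, orb_true_r; f_equal; lia.
Qed.

Lemma neg_eal0 e : eal e = 0 -> neg n p e = el (em e) (er e) (Z.of_nat p).
Proof. destruct e as [m r al]; cbn; intros ->; unfold neg; cbn; f_equal; lia. Qed.

Lemma neg_top : neg n p (top n p) = bot n.
Proof. apply neg_eal_p; reflexivity. Qed.

Lemma neg_bot : neg n p (bot n) = top n p.
Proof. apply neg_eal0; reflexivity. Qed.

Lemma inA_neg a : inA n p a -> inA n p (neg n p a).
Proof. destruct a; elt_lia. Qed.

Lemma le_top a : inA n p a -> le n a (top n p).
Proof. destruct a; elt_lia. Qed.

Lemma le_bot a : inA n p a -> le n (bot n) a.
Proof. destruct a; elt_lia. Qed.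

Lemma top_le_eq c : inA n p c -> le n (top n p) c -> c = top n p.
Proof.
  destruct c as [m r al]; intros Hc Hle.
  assert (m = Z.of_nat n /\ r = 0 /\ al = Z.of_nat p) as (-> & -> & ->) by elt_lia.
  reflexivity.
Qed.

Lemma inM_le a b : inM a -> inA n p b -> le n a b -> inM b.
Proof. destruct a, b; unfold inM; elt_lia. Qed.

Lemma inM_top : inM (top n p).
Proof. unfold inM; elt_lia. Qed.

Lemma inM_odot a b : inM a -> inM b -> inM (odot n p a b).
Proof. destruct a, b; unfold inM; elt_lia. Qed.

Lemma inM_pow a k : inM a -> inM (pow n p a k).
Proof.
  intros Ha; induction k; cbn [pow]; [apply inM_top | apply inM_odot; auto].
Qed.

(* The invariant satisfied by [a^j] when [a] is outside [M]. *)
Definition pow_shape (j : Z) (e : elt) : Prop :=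
  (1 <= eal e <= Z.of_nat p - j /\ lexle 0 0 (em e) (er e)
     /\ lexle (em e) (er e) (Z.max 0 (Z.of_nat n - j)) 0)
  \/ (eal e = 0 /\ lexle (Z.min (Z.of_nat n) (j - 1)) 0 (em e) (er e)
     /\ lexle (em e) (er e) (Z.of_nat n) 0).

Lemma pow_shape_top : pow_shape 0 (top n p).
Proof. unfold pow_shape; elt_lia. Qed.

Lemma pow_shape_odot a e j : inA n p a -> eal a <> Z.of_nat p -> 0 <= j ->
  pow_shape j e -> pow_shape (j + 1) (odot n p a e).
Proof. destruct a, e; unfold pow_shape; elt_lia. Qed.

Lemma pow_shape_pow a k : inA n p a -> ~ inM a -> pow_shape (Z.of_nat k) (pow n p a k).
Proof.
  intros Ha HM; induction k as [|k IH]; cbn [pow].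
  - apply pow_shape_top.
  - rewrite Nat2Z.inj_succ; apply pow_shape_odot; auto; [|lia].
    intros E; apply HM; split; auto.
Qed.

Lemma pow_not_inM_bot a : inA n p a -> ~ inM a -> pow n p a (Nat.max (S n) p) = bot n.
Proof.
  intros Ha HM; pose proof (pow_shape_pow a (Nat.max (S n) p) Ha HM) as Hs.
  destruct (pow n p a (Nat.max (S n) p)) as [m r al].
  unfold pow_shape, lexle in Hs; cbn [em er eal] in Hs.
  rewrite Nat2Z.inj_max, Nat2Z.inj_succ in Hs.
  assert (m = Z.of_nat n /\ r = 0 /\ al = 0) as (-> & -> & ->) by lia.
  reflexivity.
Qed.

Lemma neg_pow_p_inM a : inA n p a -> ~ inM a -> inM (neg n p (pow n p a p)).
Proof.
  intros Ha HM; pose proof (pow_shape_pow a p Ha HM) as Hs; clear Ha HM.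
  destruct (pow n p a p); unfold inM, pow_shape in *; elt_lia.
Qed.

Lemma oplus_bot_bot : oplus n p (bot n) (bot n) = bot n.
Proof. unfold oplus; rewrite neg_bot; unfold_ops; destruct_ifs; f_equal; lia. Qed.

Lemma times_bot k : times n p k (bot n) = bot n.
Proof. induction k as [|k IH]; cbn [times]; [|rewrite IH, oplus_bot_bot]; reflexivity. Qed.

Lemma oplus_inM_bot y : inM y -> oplus n p y (bot n) = y.
Proof.
  destruct y as [m r al]; intros [Hy Hal]; cbn in Hal; subst al.
  unfold oplus; rewrite neg_bot, (neg_eal_p (el m r _)) by reflexivity.
  unfold odot, arrow, pmin, lexleb, top, inA, lexle in *; destruct_ifs; try lia;
    rewrite neg_eal0 by reflexivity; cbn; f_equal; lia.
Qed.

Lemma oplus_inM y e : inM y -> inM e ->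
  oplus n p y e = let q := pmin (Z.of_nat n, 0) (em y + em e + 1, er y + er e) in
                  el (fst q) (snd q) (Z.of_nat p).
Proof.
  intros [_ Hy] [_ He]; unfold oplus.
  rewrite (neg_eal_p y), (neg_eal_p e) by auto.
  apply neg_eal0; reflexivity.
Qed.

(* The invariant satisfied by [k.y] when [y] is in [M]. *)
Definition sum_shape (j : Z) (e : elt) : Prop :=
  inM e /\ lexle (Z.min (Z.of_nat n) (j - 1)) 0 (em e) (er e).

Lemma sum_shape_oplus y e j : inM y -> sum_shape j e -> sum_shape (j + 1) (oplus n p y e).
Proof.
  intros Hy [He Hj]; rewrite oplus_inM by auto.
  destruct y, e; unfold sum_shape, inM in *; elt_lia.
Qed.

Lemma sum_shape_times y k : inM y -> (1 <= k)%nat -> sum_shape (Z.of_nat k) (times n p k y).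
Proof.
  intros Hy Hk; induction k as [|k IH]; [lia|].
  destruct (Nat.eq_dec k 0) as [->|Hk0]; cbn [times].
  - rewrite oplus_inM_bot by auto. split; auto. unfold inM in Hy; elt_lia.
  - rewrite Nat2Z.inj_succ; apply sum_shape_oplus; auto; apply IH; lia.
Qed.

Lemma times_inM_top y : inM y -> times n p (S n) y = top n p.
Proof.
  intros Hy; pose proof (sum_shape_times y (S n) Hy ltac:(lia)) as Hs.
  destruct (times n p (S n) y) as [m r al].
  unfold sum_shape, inM, inA, lexle in Hs; cbn [em er eal] in Hs; rewrite Nat2Z.inj_succ in Hs.
  assert (m = Z.of_nat n /\ r = 0 /\ al = Z.of_nat p) as (-> & -> & ->) by lia.
  reflexivity.
Qed.

Lemma tnp_inM a : inM a -> tnp n p a = top n p.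
Proof. intros Ha; apply times_inM_top, inM_pow, Ha. Qed.

Lemma tnp_not_inM a : inA n p a -> ~ inM a -> tnp n p a = bot n.
Proof. intros Ha HM; unfold tnp; rewrite pow_not_inM_bot by auto; apply times_bot. Qed.

Lemma filter_pow F a k : impl_filter n p F -> F a -> F (pow n p a k).
Proof. intros (_ & Htop & Hodot & _) Ha; induction k; cbn [pow]; auto. Qed.

(* A filter containing an element outside [M] contains its nilpotent power
   [bot], hence everything. *)
Lemma proper_filter_inM F b : proper_filter n p F -> F b -> inM b.
Proof.
  intros [HF (a & Ha & HFa)] Hb; pose proof HF as (Hin & _ & _ & Hup).
  destruct (inM_dec b) as [|HM]; auto.
  exfalso; apply HFa, (Hup (bot n)), le_bot; auto.
  rewrite <- (pow_not_inM_bot b) by auto; apply filter_pow; auto.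
Qed.

Lemma inM_proper_filter : proper_filter n p inM.
Proof.
  split; [split; [|split; [|split]]|].
  - intros a [Ha _]; exact Ha.
  - apply inM_top.
  - apply inM_odot.
  - intros a b; apply inM_le.
  - exists (bot n); split; [apply inA_bot|]; intros [_ E]; cbn in E; lia.
Qed.

Lemma inM_maximal_filter : maximal_filter n p inM.
Proof.
  split; [apply inM_proper_filter|].
  intros G HG _ a Ga; exact (proper_filter_inM G a HG Ga).
Qed.

Lemma Rad_iff_inM a : inA n p a -> Rad n p a <-> inM a.
Proof.
  intros Ha; split.
  - intros [_ HR]; apply HR, inM_maximal_filter.
  - intros HM; split; [exact Ha|].
    intros F [HF Hmax]; apply (Hmax inM inM_proper_filter); auto.
    intros b Fb; exact (proper_filter_inM F b HF Fb).
Qed.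

Lemma join_is_lub x y c : is_lub n p x y c -> is_lub n p x y (join n p x y).
Proof. intros H; exact (epsilon_spec _ _ (ex_intro _ c H)). Qed.

Lemma is_lub_sym x y c : is_lub n p x y c -> is_lub n p y x c.
Proof. intros (Hc & Hx & Hy & Hmin); repeat split; auto. Qed.

Lemma join_top_r x : inA n p x -> join n p x (top n p) = top n p.
Proof.
  intros Hx.
  assert (Htop : is_lub n p x (top n p) (top n p)).
  { repeat split; auto using inA_top, le_top. }
  destruct (join_is_lub _ _ _ Htop) as (Hc & _ & Hle & _).
  apply top_le_eq; auto.
Qed.

Lemma join_top_l x : inA n p x -> join n p (top n p) x = top n p.
Proof.
  intros Hx.
  assert (Htop : is_lub n p (top n p) x (top n p)).
  { repeat split; auto using inA_top, le_top. }
  destruct (join_is_lub _ _ _ Htop) as (Hc & Hle & _ & _).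
  apply top_le_eq; auto.
Qed.

(* An upper bound of [y] in [M] is in [M] and dominates [y] in the pair order;
   an upper bound [u] in [M] of [x] with [alpha = 0] satisfies
   [(n-1,0) <= x + u], so [u] dominates [(n-1,0) - x]. *)
Lemma is_lub_inM_r x y : inA n p x -> inM y ->
  let q := pmax (em y, er y)
             (if eal x =? 0 then pmax (0, 0) (Z.of_nat n - 1 - em x, - er x)
              else (em x, er x)) in
  is_lub n p x y (el (fst q) (snd q) (Z.of_nat p)).
Proof.
  destruct x as [m r al], y as [k s g]; intros Hx [Hy Hg]; cbn in Hg; subst g; cbn zeta.
  split; [|split; [|split]]; [elt_lia .. |].
  intros [m' r' al'] Hu H1 H2.
  assert (al' = Z.of_nat p /\ lexle k s m' r') as [-> Hks] by elt_lia.
  clear H2; unfold le in *; left; cbn [eal em er] in *; split; [lia|split; [lia|]].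
  unfold inA, pmax, lexleb, lexle in *; cbn [fst snd] in *.
  destruct (al =? 0) eqn:Hal; bool_to_Z; destruct_ifs; lia.
Qed.

Lemma join_inM_r x y : inA n p x -> inM y -> inM (join n p x y).
Proof.
  intros Hx Hy.
  destruct (join_is_lub _ _ _ (is_lub_inM_r x y Hx Hy)) as (Hc & _ & Hle & _).
  exact (inM_le y _ Hy Hc Hle).
Qed.

Lemma join_inM_l x y : inM x -> inA n p y -> inM (join n p x y).
Proof.
  intros Hx Hy.
  destruct (join_is_lub _ _ _ (is_lub_sym _ _ _ (is_lub_inM_r y x Hy Hx))) as (Hc & Hle & _).
  exact (inM_le x _ Hx Hc Hle).
Qed.

Lemma join_neg_pow_inM a : inA n p a -> inM (join n p a (neg n p (pow n p a p))).
Proof.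
  intros Ha; destruct (inM_dec a Ha) as [HM|HM].
  - apply join_inM_l, inA_neg, inM_pow; auto.
  - apply join_inM_r, neg_pow_p_inM; auto.
Qed.

Lemma tnp_top_or_bot a : inA n p a ->
  (inM a /\ tnp n p a = top n p) \/ (~ inM a /\ tnp n p a = bot n).
Proof.
  intros Ha; destruct (inM_dec a Ha) as [HM|HM]; [left | right];
    split; auto using tnp_inM, tnp_not_inM.
Qed.

End Algebra.

Theorem theorem3p6 (n p : nat) (hn : (1 <= n)%nat) (hp : (1 <= p)%nat) :
  (* (a) *)
  (forall a, inA n p a -> join n p (tnp n p a) (neg n p (tnp n p a)) = top n p) /\
  (* (b) *)
  (forall a, inA n p a ->
     (Rad n p a <-> tnp n p a = top n p) /\
     (tnp n p a = top n p <->
        forall k : nat, (0 < k)%nat -> times n p (S n) (pow n p a k) = top n p)) /\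
  (* (c) *)
  (forall (k : nat) a, (0 < k)%nat -> inA n p a ->
     times n p (S n) (pow n p (join n p a (neg n p (pow n p a p))) k) = top n p).
Proof.
  pose proof (bot_neq_top n p hn hp) as Hbt.
  split; [|split].
  - intros a Ha; destruct (tnp_top_or_bot n p hn hp a Ha) as [[_ ->]|[_ ->]].
    + rewrite neg_top, join_top_l by auto using inA_bot; reflexivity.
    + rewrite neg_bot, join_top_r by auto using inA_bot; reflexivity.
  - intros a Ha; rewrite Rad_iff_inM by auto.
    destruct (tnp_top_or_bot n p hn hp a Ha) as [[HM Ht]|[HM Ht]]; rewrite Ht.
    + split; [tauto|]; split; [|auto].
      intros _ k _; apply times_inM_top, inM_pow; auto.
    + split; [split; [tauto|congruence]|].
      split; [congruence|]; intros H.
      rewrite <- Ht; unfold tnp; apply H; lia.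
  - intros k a _ Ha; apply times_inM_top, inM_pow; auto using join_neg_pow_inM.
Qed.
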